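(* Let $X$ be an infinite dimensional separable Banach space and $T:X\to X$ a continuous linear operator such that $(X,T)$ is topologically transitive. If $(X,T)$ is not transitively sensitive, then there exists a dense open subset $U_0\subset X$ such that every $x\in U_0$ has a dense orbit $\{T^nx:n\in\mathbb{Z}_+\}$.
   Context: $N_T(U,V)=\{n\in\mathbb{Z}_+:U\cap T^{-n}V\neq\varnothing\}$; $(X,T)$ is topologically transitive if $N_T(U,V)\neq\varnothing$ for all nonempty open $U,V$. $S_T(W,\delta)=\{n\in\mathbb{Z}_+:\exists x_1,x_2\in W,\ \|T^nx_1-T^nx_2\|>\delta\}$. $(X,T)$ is transitively sensitive if there is $\delta>0$ with $S_T(W,\delta)\cap N_T(U,V)\neq\varnothing$ for all nonempty open $U,V,W\subset X$. *)

From HB Require Import structures.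
From mathcomp Require Import all_boot all_order all_algebra.
From mathcomp Require Import all_classical all_reals all_analysis.
Set Implicit Arguments. Unset Strict Implicit. Unset Printing Implicit Defensive.
Import Order.TTheory GRing.Theory Num.Theory.
Import numFieldNormedType.Exports.
Local Open Scope classical_set_scope.
Local Open Scope ring_scope.

Definition separable (T : topologicalType) : Prop :=
  exists D : set T, countable D /\ dense D.

Definition infinite_dimensional (R : realType) (X : normedModType R) : Prop :=
  forall n : nat, exists v : 'I_n -> X,
    forall c : 'I_n -> R, \sum_(i < n) c i *: v i = 0 -> forall i, c i = 0.

Definition N_T (X : Type) (T : X -> X) (U V : set X) : set nat :=
  [set n | U `&` (iter n T) @^-1` V !=set0].

Definition topologically_transitive (X : topologicalType) (T : X -> X) : Prop :=
  forall U V : set X, open U -> open V -> U !=set0 -> V !=set0 ->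
    N_T T U V !=set0.

Definition S_T (R : realType) (X : normedModType R) (T : X -> X)
    (W : set X) (delta : R) : set nat :=
  [set n | exists x1 x2, W x1 /\ W x2 /\ delta < `|iter n T x1 - iter n T x2|].

Definition transitively_sensitive (R : realType) (X : normedModType R)
    (T : X -> X) : Prop :=
  exists delta : R, 0 < delta /\
    forall U V W : set X, open U -> open V -> open W ->
      U !=set0 -> V !=set0 -> W !=set0 ->
      S_T T W delta `&` N_T T U V !=set0.

Definition T_orbit (X : Type) (T : X -> X) (x : X) : set X :=
  range (fun n : nat => iter n T x).

From HB Require Import structures.
From mathcomp Require Import all_boot all_order all_algebra.
From mathcomp Require Import all_classical all_reals all_analysis.
Set Implicit Arguments. Unset Strict Implicit. Unset Printing Implicit Defensive.
Import Order.TTheory GRing.Theory Num.Theory.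
Import numFieldNormedType.Exports.
Local Open Scope classical_set_scope.
Local Open Scope ring_scope.

(* If T is not transitively sensitive (with delta = 1), there are nonempty open
   U, V, W such that the iterates T^n with n in N_T(U,V) move no two points of W
   apart by more than 1.  By linearity this says that {T^n : n in N_T(U,V)} is
   equicontinuous at 0.  Now fix x in U and an open G; by transitivity choose a
   point q of V and c with T^c q in G, and a ball B(q, s) that T^c maps into G
   and that lies in V.  Transitivity again gives y close to x in U and n with
   T^n y close to q; then n is in N_T(U,V), so T^n x stays close to T^n y, hence
   lands in B(q, s), and T^(c+n) x lies in G.  So every point of U has a dense
   orbit, and so does every point of the open set U0 := \bigcup_k T^-k U, which
   is dense by transitivity. *)

Lemma continuous_iter (X : topologicalType) (T : X -> X) n :
  continuous T -> continuous (iter n T).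
Proof.
move=> cT; elim: n => [|n IHn] x //=.
exact: continuous_comp (IHn x) (cT _).
Qed.

Lemma open_norm_ball (R : realType) (X : normedModType R) (A : set X) x :
  open A -> A x -> exists2 e : R, 0 < e & forall y, `|x - y| < e -> A y.
Proof.
move=> oA Ax; have /nbhs_ballP[e e0 sub] : nbhs x A by exact: open_nbhs_nbhs.
by exists e => // y xy; apply: sub; rewrite -ball_normE.
Qed.

Lemma T_orbit_iter (X : Type) (T : X -> X) k x :
  T_orbit T (iter k T x) `<=` T_orbit T x.
Proof. by move=> _ [m _ <-]; exists (m + k)%N => //; rewrite iterD. Qed.

Lemma dense_T_orbit_iter (X : topologicalType) (T : X -> X) k x :
  dense (T_orbit T (iter k T x)) -> dense (T_orbit T x).
Proof.
move=> dx G G0 oG; have [y [Gy orb_y]] := dx G G0 oG.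
by exists y; split => //; exact: T_orbit_iter orb_y.
Qed.

Lemma open_bigcup_preimage_iter (X : topologicalType) (T : X -> X) (U : set X) :
  continuous T -> open U -> open (\bigcup_k (iter k T) @^-1` U).
Proof.
move=> cT oU; apply: bigcup_open => k _.
by apply: open_comp oU => z _; exact: continuous_iter.
Qed.

Lemma dense_bigcup_preimage_iter (X : topologicalType) (T : X -> X) (U : set X) :
  topologically_transitive T -> open U -> U !=set0 ->
  dense (\bigcup_k (iter k T) @^-1` U).
Proof.
move=> tT oU U0 G G0 oG; have [k [x [Gx Ux]]] := tT G U oG oU G0 U0.
by exists x; split => //; exists k.
Qed.

Section LinearIterates.
Variables (R : realType) (X : normedModType R) (T : {linear X -> X}).

Lemma iter_linearB n a b : iter n T (a - b) = iter n T a - iter n T b.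
Proof. by elim: n => //= n ->; rewrite raddfB. Qed.

Lemma iter_linearZ n (t : R) a : iter n T (t *: a) = t *: iter n T a.
Proof. by elim: n => //= n ->; rewrite linearZ. Qed.

Lemma not_transitively_sensitive_bounded :
  ~ transitively_sensitive T ->
  exists U V W : set X, [/\ open U, open V & open W] /\
    [/\ U !=set0, V !=set0 & W !=set0] /\
    forall n, N_T T U V n -> forall x1 x2, W x1 -> W x2 ->
      `|iter n T x1 - iter n T x2| <= 1.
Proof.
move=> nTS; apply: contrapT => nbounded; apply: nTS.
exists 1; split => // U V W oU oV oW U0 V0 W0; apply: contrapT => nS.
apply: nbounded; exists U, V, W; do 2!split => //; move=> n Nn x1 x2 Wx1 Wx2.
by rewrite leNgt; apply/negP => lt1; apply: nS; exists n; split => //; exists x1, x2.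
Qed.

Lemma bounded_iter_equicontinuous (N : set nat) (W : set X) :
  open W -> W !=set0 ->
  (forall n, N n -> forall x1 x2, W x1 -> W x2 ->
     `|iter n T x1 - iter n T x2| <= 1) ->
  exists2 e : R, 0 < e & forall n, N n -> forall (t : R) k,
    0 < t -> `|k| < e * t -> `|iter n T k| <= t.
Proof.
move=> oW [w Ww] bounded; have [e e0 subW] := open_norm_ball oW Ww.
exists e => // n Nn t k t0 kt; set h := t^-1 *: k.
have hk : k = t *: h by rewrite /h scalerA divff ?gt_eqF // scale1r.
have Wwh : W (w + h).
  apply: subW; rewrite opprD addrA subrr sub0r normrN.
  by rewrite /h normrZ ger0_norm ?invr_ge0 ?ltW // mulrC ltr_pdivrMr.
have := bounded n Nn _ _ Wwh Ww; rewrite -iter_linearB (addrC w) addrK => Th.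
rewrite hk iter_linearZ normrZ (ger0_norm (ltW t0)).
by rewrite -[X in _ <= X]mulr1 ler_wpM2l // ltW.
Qed.

Lemma dense_T_orbit_of_equicontinuous (U V : set X) (e : R) :
  continuous T -> topologically_transitive T -> open U -> open V ->
  V !=set0 -> 0 < e ->
  (forall n, N_T T U V n -> forall (t : R) k,
     0 < t -> `|k| < e * t -> `|iter n T k| <= t) ->
  forall x, U x -> dense (T_orbit T x).
Proof.
move=> cT tT oU oV V0 e0 equi x Ux G G0 oG.
have [c [q [Vq Gq]]] := tT V G oV oG V0 G0.
have oA : open (V `&` (iter c T) @^-1` G).
  by apply: openI oV _; apply: open_comp oG => z _; exact: continuous_iter.
have [s s0 subA] := open_norm_ball oA (conj Vq Gq).
have s20 : 0 < s / 2 by rewrite divr_gt0.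
have oUx : open (U `&` ball x (e * (s / 2))) by exact/openI/ball_open.
have Ux0 : (U `&` ball x (e * (s / 2))) !=set0.
  by exists x; split => //; apply: ballxx; rewrite mulr_gt0.
have [n [y [[Uy xy] qy]]] :=
  tT _ _ oUx (ball_open q (s / 2)) Ux0 (ex_intro _ q (ballxx q s20)).
rewrite -ball_normE /= in xy qy.
have Nn : N_T T U V n.
  exists y; split => //; apply: (subA _ _).1.
  by rewrite (lt_trans qy) // ltr_pdivrMr // ltr_pMr // ltr1n.
have Txy := equi n Nn (s / 2) (x - y) s20 xy.
have qx : `|q - iter n T x| < s.
  rewrite (le_lt_trans (ler_distD (iter n T y) _ _)) // [s]splitr.
  by rewrite (distrC (iter n T y)) -iter_linearB ltr_leD.
exists (iter c T (iter n T x)); split; first exact: (subA _ qx).2.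
by exists (c + n)%N => //; rewrite iterD.
Qed.

End LinearIterates.

Theorem proposition7p4 (R : realType) (X : completeNormedModType R)
    (T : {linear X -> X}) :
  infinite_dimensional X ->
  separable X ->
  continuous T ->
  topologically_transitive T ->
  ~ transitively_sensitive T ->
  exists U0 : set X, open U0 /\ dense U0 /\
    forall x, U0 x -> dense (T_orbit (T : X -> X) x).
Proof.
move=> _ _ cT tT nTS.
have [U [V [W [[oU oV oW] [[U0 V0 W0] bounded]]]]] :=
  not_transitively_sensitive_bounded nTS.
have [e e0 equi] := bounded_iter_equicontinuous oW W0 bounded.
have orbit_U := dense_T_orbit_of_equicontinuous cT tT oU oV V0 e0 equi.
exists (\bigcup_k (iter k T) @^-1` U); split.
  exact: open_bigcup_preimage_iter.
split; first exact: dense_bigcup_preimage_iter.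
by move=> x [k _ Ux]; exact: dense_T_orbit_iter (orbit_U _ Ux).
Qed.
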